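(* Let $n$ be an odd positive integer. Consider the $[[n^2,1,n]]$ qubit Shor code on $n^2$ qubits and an $[[n,1,d]]$ qutrit CSS code $\mathrm{CSS}(\hat{X},\hat{\mathcal{H}}_{\hat{X}};\hat{Z},\hat{\mathcal{H}}_{\hat{Z}})$ on $n$ qutrits. Then the circuit $$C\hat{C}^L = C\hat{C}^{\otimes n}_{1\sim n}\, \hat{\mathcal{R}}\, C\hat{C}^{\otimes n}_{n+1 \sim 2n}\, \hat{\mathcal{R}} \cdots \hat{\mathcal{R}}\, C\hat{C}^{\otimes n}_{(n-1)n+1 \sim n^2}$$ realizes a fault-tolerant logical controlled-$\hat{C}$ gate between the logical qubit and the logical qutrit, i.e. it acts on logical basis states as $$C\hat{C}^L\,\ket{\alpha}_L\ket{\hat{\beta}}_L = \ket{\alpha}_L\ket{(1+\alpha)\cdot\hat{\beta}}_L,\qquad \alpha\in\{0,1\},\ \hat{\beta}\in\mathbb{F}_3,$$ where $(1+\alpha)\cdot\hat\beta$ is computed modulo $3$.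
   Context: Qubit basis states are $\ket{l}$, $l\in\{0,1\}$; qutrit basis states are $\ket{\hat{k}}$, $k\in\mathbb{F}_3$. The controlled charge conjugation gate $C\hat{C}$ acts on a (control) qubit and a (target) qutrit by $C\hat{C}\ket{l}\ket{\hat{k}} = \ket{l}\ket{(-1)^l\hat{k}}$ (i.e. it applies $\hat{k}\mapsto -\hat{k}$ on the qutrit iff the qubit is $\ket{1}$). The $[[n^2,1,n]]$ qubit Shor code: the $n^2$ qubits are grouped into $n$ consecutive blocks of $n$ qubits (block $b$ consists of qubits $(b-1)n+1,\dots,bn$). Its $Z$-stabilizers are $Z_iZ_{i+1}$ for consecutive qubits $i,i+1$ in the same block, and its $X$-stabilizers are products of $X$ over two consecutive blocks. Writing $\tilde{0}=0\cdots0$ and $\tilde{1}=1\cdots1$ ($n$ bits), the logical states are (up to normalization) $\ket{\alpha}_L=\sum_{(a_1,\dots,a_n)\in\mathbb{F}_2^n,\ \sum_b a_b\equiv\alpha \ (\mathrm{mod}\ 2)} \ket{\tilde{a}_1\tilde{a}_2\cdots\tilde{a}_n}$ for $\alpha\in\{0,1\}$ (for $n=3$ this is the standard $[[9,1,3]]$ Shor code). An $[[n,1,d]]$ qutrit CSS code is defined by two parity-check matrices over $\mathbb{F}_3$ with $n$ columns, whose row spaces $\hat{\mathcal{H}}_{\hat{X}}$ (the $\hat X$-stabilizers) and $\hat{\mathcal{H}}_{\hat{Z}}$ (the $\hat Z$-stabilizers) satisfy $\hat{\mathcal{H}}_{\hat{X}}\subseteq\hat{\mathcal{H}}_{\hat{Z}}^{\perp}$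 with $\dim(\hat{\mathcal{H}}_{\hat{Z}}^\perp/\hat{\mathcal{H}}_{\hat{X}})=1$; the distance $d$ is the minimal Hamming weight of a vector in $\hat{\mathcal{H}}_{\hat{Z}}^\perp\setminus\hat{\mathcal{H}}_{\hat{X}}$ and $\hat{\mathcal{H}}_{\hat{X}}^\perp\setminus\hat{\mathcal{H}}_{\hat{Z}}$. Fixing a representative $\hat{x}$ of a generator of $\hat{\mathcal{H}}_{\hat{Z}}^\perp/\hat{\mathcal{H}}_{\hat{X}}$, the logical states are $\ket{\hat{\beta}}_L=\sum_{\hat{y}\in\hat{\mathcal{H}}_{\hat{X}}}\ket{\hat{\beta}\hat{x}+\hat{y}}$, $\hat\beta\in\mathbb{F}_3$. $C\hat{C}^{\otimes n}_{i\sim j}$ (with $j-i+1=n$) denotes the transversal layer in which, for each $m=1,\dots,n$, the physical qubit $i+m-1$ of the Shor code controls a $C\hat{C}$ gate on the $m$-th physical qutrit of the qutrit code. $\hat{\mathcal{R}}$ denotes an error-correction operation (syndrome measurement and recovery) on the qutrit code, acting as the identity on its code space. *)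

From HB Require Import structures.
From mathcomp Require Import all_boot all_order all_algebra.
Set Implicit Arguments. Unset Strict Implicit. Unset Printing Implicit Defensive.
Import GRing.Theory.
Local Open Scope ring_scope.

(* Qubits of the [[n^2,1,n]] Shor code are indexed by pairs (b, m) : 'I_n * 'I_n,
   meaning the m-th qubit of block b (i.e. physical qubit b*n+m, 0-indexed). *)
Definition qubits (n : nat) := {ffun 'I_n * 'I_n -> bool}.
Definition qutrits (n : nat) := 'rV['F_3]_n.
Definition jstate (K : Type) (n : nat) := qubits n -> qutrits n -> K.

(* Shor code logical state |alpha>_L (up to normalization): sum over
   a in F_2^n with sum a = alpha (mod 2) of |a_1~ a_2~ ... a_n~>. *)
Definition shor_ket (K : nzRingType) (n : nat) (al : bool) : qubits n -> K :=
  fun q => ([exists a : {ffun 'I_n -> bool},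
               [forall bm : 'I_n * 'I_n, q bm == a bm.1]
               && (odd (\sum_(i < n) nat_of_bool (a i)) == al)] : bool)%:R.

(* Qutrit CSS logical state |beta>_L = sum_{y in rowspace HX} |beta x + y>.
   Distinct y give distinct basis states, so the amplitude of t is 1 iff
   t - beta x lies in the row space of HX. *)
Definition css_ket (K : nzRingType) (n rx : nat) (HX : 'M['F_3]_(rx, n))
  (x : 'rV['F_3]_n) (be : 'F_3) : qutrits n -> K :=
  fun t => ((t - be *: x <= HX)%MS : bool)%:R.

Definition in_code_space (K : nzRingType) (n rx : nat) (HX : 'M['F_3]_(rx, n))
  (x : 'rV['F_3]_n) (v : qutrits n -> K) : Prop :=
  exists c : 'F_3 -> K, v = fun t => \sum_(b : 'F_3) c b * css_ket K HX x b t.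

Definition tensor (K : nzRingType) (n : nat) (u : qubits n -> K)
  (v : qutrits n -> K) : jstate K n := fun q t => u q * v t.

(* Transversal layer CC^{(x)n} controlled by block k: qubit (k,m) controls
   the C-hat gate on qutrit m.  It maps |q>|t> to |q>|t'> with
   t'_m = (-1)^{q(k,m)} t_m; being an involutive permutation of the basis,
   its action on amplitudes is f |-> f(q, flip t). *)
Definition cc_layer (K : Type) (n : nat) (k : 'I_n) (f : jstate K n) : jstate K n :=
  fun q t => f q (\row_m (if q (k, m) then - t 0 m else t 0 m)).

Definition apply_R (K : Type) (n : nat) (R : (qutrits n -> K) -> (qutrits n -> K))
  (f : jstate K n) : jstate K n := fun q => R (f q).

(* The circuit CC_{block 0} R_0 CC_{block 1} R_1 ... R_{n-2} CC_{block n-1}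
   (rightmost applied first). *)
Definition shor_cc_circuit (K : Type) (n : nat)
  (Rs : 'I_n -> (qutrits n -> K) -> (qutrits n -> K)) (f : jstate K n) : jstate K n :=
  foldr (fun k g => cc_layer k (if k.+1 == n then g else apply_R (Rs k) g))
        f (enum 'I_n).

From HB Require Import structures.
From mathcomp Require Import all_boot all_order all_algebra.
From Stdlib Require Import FunctionalExtensionality.
Set Implicit Arguments. Unset Strict Implicit. Unset Printing Implicit Defensive.
Import GRing.Theory.
Local Open Scope ring_scope.

(* On the support of the Shor state |al>_L every block b of qubits carries one
   bit a_b, with sum_b a_b = al mod 2, so the layer controlled by block b
   negates the logical qutrit label iff a_b = 1 (negating a CSS codeword of
   label be gives one of label -be).  Between layers the joint state is a sum
   of |q> (x) |be_q>_L, on which every recovery acts trivially.  At the end the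
   label is (-1)^(sum_b a_b) be = (-1)^al be, and -1 = 1 + 1 in F_3. *)

Lemma sign_F3 (b : bool) : (-1) ^+ b = 1 + b%:R :> 'F_3.
Proof. by case: b => //; apply/eqP. Qed.

Section CssKet.

Variables (K : nzRingType) (n rx : nat) (HX : 'M['F_3]_(rx, n)) (x : 'rV['F_3]_n).

Lemma css_ketN (be : 'F_3) (t : qutrits n) :
  css_ket K HX x be (- t) = css_ket K HX x (- be) t.
Proof.
by rewrite /css_ket -(eqmx_opp (t - (- be) *: x)) opprB scaleNr addrC.
Qed.

Lemma in_code_space_scale_css (c : K) (be : 'F_3) :
  in_code_space HX x (fun t => c * css_ket K HX x be t).
Proof.
exists (fun b => c * (b == be)%:R); apply: functional_extensionality => t.
rewrite (bigD1 be) //= eqxx mulr1 big1 ?addr0 // => b /negbTE ->.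
by rewrite mulr0 mul0r.
Qed.

End CssKet.

Variant shor_ket_spec (K : nzRingType) (n : nat) (al : bool) (q : qubits n) :
    K -> Prop :=
  | ShorKetOut : shor_ket_spec al q 0
  | ShorKetIn (a : {ffun 'I_n -> bool}) of (forall b m, q (b, m) = a b)
      & odd (\sum_(i < n) nat_of_bool (a i)) = al : shor_ket_spec al q 1.

Lemma shor_ketP (K : nzRingType) (n : nat) (al : bool) (q : qubits n) :
  shor_ket_spec al q (shor_ket K al q).
Proof.
rewrite /shor_ket; case: existsP => [[a /andP[/forallP qE /eqP sum_a]]|_].
  by apply: ShorKetIn sum_a => b m; apply/eqP/(qE (b, m)).
exact: ShorKetOut.
Qed.

Lemma count_block_bits (n : nat) (q : qubits n) (a : {ffun 'I_n -> bool}) :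
    (forall b m, q (b, m) = a b) ->
  count (fun k => q (k, k)) (enum 'I_n) = (\sum_(i < n) nat_of_bool (a i))%N.
Proof.
move=> qE; rewrite -sum1_count big_mkcond /= big_enum /=.
by apply: eq_bigr => i _; rewrite qE; case: (a i).
Qed.

Section Circuit.

Variables (K : nzRingType) (n rx : nat) (HX : 'M['F_3]_(rx, n)) (x : 'rV['F_3]_n).
Variable al : bool.

Definition css_branch (s : qubits n -> 'F_3) : jstate K n :=
  fun q t => shor_ket K al q * css_ket K HX x (s q) t.

Lemma apply_R_css_branch (R : (qutrits n -> K) -> qutrits n -> K) s :
    (forall v, in_code_space HX x v -> R v = v) ->
  apply_R R (css_branch s) = css_branch s.
Proof.
move=> HR; apply: functional_extensionality => q.
exact/HR/in_code_space_scale_css.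
Qed.

(* (k, k) is merely some qubit of block k: on the support of the Shor ket all
   qubits of a block agree. *)
Lemma cc_layer_css_branch (k : 'I_n) s :
  cc_layer k (css_branch s)
  = css_branch (fun q => if q (k, k) then - s q else s q).
Proof.
apply: functional_extensionality => q; apply: functional_extensionality => t.
rewrite /cc_layer /css_branch; case: shor_ketP => [|a qE _]; first by rewrite !mul0r.
have -> : \row_m (if q (k, m) then - t 0 m else t 0 m) = if a k then - t else t.
  by apply/rowP => m; rewrite !mxE qE; case: (a k); rewrite ?mxE.
by rewrite qE; case: (a k); rewrite ?css_ketN.
Qed.

Lemma foldr_css_branch (Rs : 'I_n -> (qutrits n -> K) -> qutrits n -> K)
    (l : seq 'I_n) s :
    (forall k v, in_code_space HX x v -> Rs k v = v) ->
  foldr (fun k g => cc_layer k (if k.+1 == n then g else apply_R (Rs k) g))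
        (css_branch s) l
  = css_branch (fun q => (-1) ^+ count (fun k => q (k, k)) l * s q).
Proof.
move=> HR; elim: l => [|k l IHl] /=.
  by congr css_branch; apply: functional_extensionality => q; rewrite mul1r.
rewrite IHl; set g := css_branch _.
have -> : (if k.+1 == n then g else apply_R (Rs k) g) = g.
  by case: ifP => // _; exact: apply_R_css_branch (HR k).
rewrite cc_layer_css_branch; congr css_branch.
apply: functional_extensionality => q.
by case: (q (k, k)); rewrite /= ?exprS ?mulN1r ?mulNr.
Qed.

End Circuit.

Theorem lemma1 (K : comNzRingType) (n : nat) (n_odd : odd n)
  (rx rz : nat) (HX : 'M['F_3]_(rx, n)) (HZ : 'M['F_3]_(rz, n))
  (x : 'rV['F_3]_n)
  (HXZ : HX *m HZ^T = 0)
  (xZ : x *m HZ^T = 0)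
  (xnX : ~~ (x <= HX)%MS)
  (dim1 : (\rank HX + \rank HZ).+1 = n)
  (Rs : 'I_n -> (qutrits n -> K) -> (qutrits n -> K))
  (HR : forall k v, in_code_space HX x v -> Rs k v = v)
  (al : bool) (be : 'F_3) :
  shor_cc_circuit Rs (tensor (shor_ket K al) (css_ket K HX x be))
  = tensor (shor_ket K al) (css_ket K HX x ((1 + (nat_of_bool al)%:R) * be)).
Proof.
have -> : tensor (shor_ket K al) (css_ket K HX x be)
          = css_branch K HX x al (fun _ => be) by [].
rewrite /shor_cc_circuit foldr_css_branch //.
apply: functional_extensionality => q; apply: functional_extensionality => t.
rewrite /css_branch /tensor; case: shor_ketP => [|a qE sum_a]; first by rewrite !mul0r.
by rewrite (count_block_bits qE) -signr_odd sum_a sign_F3.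
Qed.
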